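(* If $G$ is a cactus on $n$ vertices, then $\alpha_1(G)\geq \Big\lfloor\frac{n}{2}\Big\rfloor+r(n)$, where $r(n)=0$ if $n\equiv 0\pmod 4$ and $r(n)=1$ otherwise.
   Context: All graphs are finite and simple, with nonempty vertex set. For a graph $G$, a $k$-sparse set is a set of vertices inducing a subgraph of maximum degree at most $k$, and $\alpha_k(G)$ denotes the maximum size of a $k$-sparse set in $G$. A cactus is a graph (not necessarily connected) in which every block is a cycle, a single edge, or a single vertex. *)

From mathcomp Require Import all_boot.
Set Implicit Arguments. Unset Strict Implicit. Unset Printing Implicit Defensive.

(* A finite simple graph: vertex type T : finType, adjacency e : rel T,
   symmetric and irreflexive. *)
Section Graphs.
Variables (T : finType) (e : rel T).

Definition nbrs_in (S : {set T}) (x : T) : {set T} := [set y in S | e x y].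

Definition k_sparse (k : nat) (S : {set T}) : bool :=
  [forall x in S, #|nbrs_in S x| <= k].

Definition alpha_k (k : nat) : nat := \max_(S : {set T} | k_sparse k S) #|S|.

Definition induced_rel (S : {set T}) : rel T :=
  fun x y => [&& x \in S, y \in S & e x y].

(* G[S] is connected (the empty graph counts as connected) *)
Definition connected_set (S : {set T}) : bool :=
  [forall x in S, forall y in S, connect (induced_rel S) x y].

Definition biconn (S : {set T}) : bool :=
  [&& S != set0, connected_set S & [forall v in S, connected_set (S :\ v)]].

(* a block: a maximal connected subgraph without a cut vertex
   (blocks are induced subgraphs, so they are described by vertex sets) *)
Definition is_block (B : {set T}) : bool :=
  biconn B && [forall C : {set T}, (B \proper C) ==> ~~ biconn C].

Definition is_cycle_set (B : {set T}) : bool :=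
  [&& 3 <= #|B|, connected_set B & [forall x in B, #|nbrs_in B x| == 2]].

Definition is_edge_set (B : {set T}) : bool :=
  [exists x, exists y, (B == [set x; y]) && e x y].

Definition is_vertex_set (B : {set T}) : bool := #|B| == 1.

Definition cactus : Prop :=
  forall B : {set T}, is_block B ->
    [|| is_cycle_set B, is_edge_set B | is_vertex_set B].

End Graphs.

Definition r4 (n : nat) : nat := if n %% 4 == 0 then 0 else 1.

From mathcomp Require Import all_boot zify.

Set Implicit Arguments. Unset Strict Implicit. Unset Printing Implicit Defensive.

(* Induct on the vertex set W of an induced subgraph. If G[W] has an isolated
   vertex, keep it and recurse on the rest. Otherwise G[W] has two distinct
   vertices u, w whose closed neighbourhoods together have at most four
   vertices: two vertices of degree at most one, or else two adjacent vertices
   of degree at most two in an end block, since biconnected subgraphs of a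
   cactus have maximum degree two. Keeping u and w and recursing on W minus
   those neighbourhoods gains 2 vertices for at most 4 removed, and
   m/2 + r(m) grows by at most 2 when m grows by at most 4.
   The end block is reached by descending through pieces K of minimum degree
   two hanging from a single vertex c: either c |: K is biconnected, or a cut
   vertex of it splits off a smaller such piece. *)

Definition sparse_lb (m : nat) : nat := m./2 + r4 m.

Lemma sparse_lbS m : sparse_lb m.+1 <= (sparse_lb m).+1.
Proof. by rewrite /sparse_lb /r4; case: eqP; case: eqP; lia. Qed.

Lemma sparse_lb_subn m k : k <= 4 -> sparse_lb m <= sparse_lb (m - k) + 2.
Proof. by rewrite /sparse_lb /r4 => ?; case: eqP; case: eqP; lia. Qed.

Lemma card_gt1_neq (T : finType) (A : {set T}) a : 1 < #|A| -> exists2 z, z \in A & z != a.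
Proof.
case/card_gt1P => x [y [xA yA xy]].
by have [xa|] := eqVneq x a; [exists y => //; rewrite -xa eq_sym | exists x].
Qed.

Section Graph.
Variables (T : finType) (e : rel T).
Hypotheses (esym : symmetric e) (eirr : irreflexive e).

Definition cnbrs_in (W : {set T}) (x : T) : {set T} := x |: nbrs_in e W x.

Definition unreached (S : {set T}) (r : T) : {set T} :=
  [set y in S | ~~ connect (induced_rel e S) r y].

Lemma nbrs_in_sub (A : {set T}) x : nbrs_in e A x \subset A.
Proof. by apply/subsetP => y; rewrite inE => /andP []. Qed.

Lemma nbrs_inS (A B : {set T}) x : A \subset B -> nbrs_in e A x \subset nbrs_in e B x.
Proof.
by move=> AB; apply/subsetP => y; rewrite !inE => /andP [/(subsetP AB) -> ->].
Qed.

Lemma nbrs_in_proper (A : {set T}) x : x \in A -> nbrs_in e A x \proper A.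
Proof.
move=> xA; apply/properP; split; first exact: nbrs_in_sub.
by exists x => //; rewrite inE eirr andbF.
Qed.

Lemma card_cnbrs_in (W : {set T}) x : #|cnbrs_in W x| = #|nbrs_in e W x|.+1.
Proof. by rewrite cardsU1 inE eirr andbF. Qed.

Lemma induced_rel_sym (S : {set T}) : symmetric (induced_rel e S).
Proof. by move=> x y; rewrite /induced_rel esym andbCA. Qed.

Lemma connect_inducedC (S : {set T}) x y :
  connect (induced_rel e S) x y = connect (induced_rel e S) y x.
Proof. exact/sym_connect_sym/induced_rel_sym. Qed.

Lemma connect_inducedS (A B : {set T}) x y : A \subset B ->
  connect (induced_rel e A) x y -> connect (induced_rel e B) x y.
Proof.
move=> AB; apply: connect_sub => a b /and3P [aA bA eab].
by apply: connect1; rewrite /induced_rel !(subsetP AB) ?eab.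
Qed.

Lemma connect_induced1 (S : {set T}) x y : x \in S -> y \in S -> e x y ->
  connect (induced_rel e S) x y.
Proof. by move=> xS yS exy; apply: connect1; rewrite /induced_rel xS yS. Qed.

Lemma connected_from (S : {set T}) r : {in S, forall y, connect (induced_rel e S) r y} ->
  connected_set e S.
Proof.
move=> rS; apply/forallP => x; apply/implyP => xS; apply/forallP => y; apply/implyP => yS.
by apply: connect_trans (rS y yS); rewrite connect_inducedC rS.
Qed.

Lemma connected_unreached0 (S : {set T}) r : unreached S r = set0 -> connected_set e S.
Proof.
move=> U0; apply: (@connected_from S r) => y yS; apply/negPn/negP => nry.
by have := in_set0 y; rewrite -U0 inE yS nry.
Qed.

Lemma unreached_closed (S : {set T}) r y z : y \in unreached S r -> z \in S -> e y z ->
  z \in unreached S r.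
Proof.
rewrite !inE => /andP [yS nry] zS eyz; rewrite zS; apply: contra nry => rz.
by apply: connect_trans rz _; apply: connect_induced1; rewrite // esym.
Qed.

Lemma connected_setU1 (S : {set T}) v x : connected_set e S -> x \in S -> e v x ->
  connected_set e (v |: S).
Proof.
move=> /forallP cS xS evx; apply: (@connected_from _ x) => y.
rewrite in_setU1 => /orP [/eqP -> | yS].
  by apply: connect_induced1; rewrite ?setU11 ?setU1r // esym.
apply: connect_inducedS (subsetUr _ _) _.
by move/implyP: (cS x) => /(_ xS) /forallP /(_ y); rewrite yS.
Qed.

Lemma biconnD1 (S : {set T}) v x : v \in S -> x \in S -> e v x ->
  {in S, forall u, connected_set e (S :\ u)} -> biconn e S.
Proof.
move=> vS xS evx cD1; apply/and3P; split.
- by apply/set0Pn; exists v.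
- rewrite -(setD1K vS); apply: connected_setU1 (evx); first exact: cD1.
  by rewrite in_setD1 xS andbT; apply: contraTneq evx => ->; rewrite eirr.
- by apply/forallP => u; apply/implyP => /cD1.
Qed.

Lemma k_sparse_small k (A : {set T}) : #|A| <= k.+1 -> k_sparse e k A.
Proof.
move=> leAk; apply/forallP => x; apply/implyP => xA.
by rewrite -ltnS; apply: leq_trans (proper_card (nbrs_in_proper xA)) leAk.
Qed.

Lemma k_sparse_setU k (A S : {set T}) : k_sparse e k A -> k_sparse e k S ->
  {in A & S, forall x y, ~~ e x y} -> k_sparse e k (A :|: S).
Proof.
move=> /forallP spA /forallP spS nAS; apply/forallP => x; apply/implyP.
have nbrsU (B C : {set T}) : {in C, forall y, ~~ e x y} -> nbrs_in e (B :|: C) x = nbrs_in e B x.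
  move=> nC; apply/setP => y; rewrite !inE.
  by case: (boolP (y \in C)) => [/nC/negbTE -> | _]; rewrite ?andbF ?orbF.
rewrite in_setU => /orP [xA | xS].
  rewrite nbrsU; first exact: (implyP (spA x)).
  by move=> y; apply: nAS.
rewrite setUC nbrsU; first exact: (implyP (spS x)).
by move=> y yA; rewrite esym; apply: nAS.
Qed.

Lemma sparse_extend (W A X S : {set T}) : A \subset X -> #|A| <= 2 ->
  {in A, forall x, nbrs_in e W x \subset X} -> S \subset W :\: X -> k_sparse e 1 S ->
  k_sparse e 1 (A :|: S) /\ #|A :|: S| = #|A| + #|S|.
Proof.
move=> AX A2 nbrsA SWX spS; split.
  apply: k_sparse_setU => //; first exact: k_sparse_small.
  move=> x y xA yS; apply/negP => exy.
  have /setDP [yW /negP] := subsetP SWX y yS; apply.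
  by apply: (subsetP (nbrsA x xA)); rewrite inE yW exy.
rewrite -cardsUI; have -> : A :&: S = set0.
  apply/setP => y; rewrite !inE; apply/andP => -[/(subsetP AX) yX /(subsetP SWX)].
  by rewrite inE yX.
by rewrite cards0 addn0.
Qed.

Section Reduction.

Hypothesis reducible : forall W : {set T}, W != set0 ->
  (exists2 u, u \in W & nbrs_in e W u = set0) \/
  (exists u w, [/\ u \in W, w \in W, u != w & #|cnbrs_in W u :|: cnbrs_in W w| <= 4]).

Lemma sparse_subset_lb (W : {set T}) :
  exists S : {set T}, [/\ S \subset W, k_sparse e 1 S & sparse_lb #|W| <= #|S|].
Proof.
have [n] := ubnP #|W|; elim: n W => // n IH W /ltnSE leWn.
have [-> | W0] := eqVneq W set0.
  by exists set0; rewrite sub0set cards0 k_sparse_small ?cards0.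
have reduce (A X : {set T}) : X \subset W -> X != set0 -> A \subset X -> #|A| <= 2 ->
    {in A, forall x, nbrs_in e W x \subset X} ->
    exists S : {set T}, [/\ S \subset W, k_sparse e 1 S & sparse_lb (#|W| - #|X|) + #|A| <= #|S|].
  move=> XW X0 AX A2 nbrsA.
  have [|S [SWX spS lbS]] := IH (W :\: X).
    by rewrite cardsDS //; move: X0 (subset_leq_card XW); rewrite -card_gt0; lia.
  have [spAS cardAS] := sparse_extend AX A2 nbrsA SWX spS.
  exists (A :|: S); split => //.
    by rewrite subUset (subset_trans AX XW) (subset_trans SWX) ?subsetDl.
  by rewrite cardAS addnC leq_add2l -(cardsDS XW).
case: (reducible W0) => [[u uW Nu] | [u [w [uW wW uw X4]]]].
  have [||||x|S [SW spS lbS]] := reduce [set u] [set u].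
  - by rewrite sub1set.
  - by apply/set0Pn; exists u; rewrite inE.
  - by [].
  - by rewrite cards1.
  - by rewrite inE => /eqP ->; rewrite Nu sub0set.
  exists S; split => //; apply: leq_trans lbS.
  have W1 : 0 < #|W| by apply/card_gt0P; exists u.
  by rewrite cards1 addn1 subn1 -{1}(prednK W1) sparse_lbS.
pose X := cnbrs_in W u :|: cnbrs_in W w.
have [||||x|S [SW spS lbS]] := reduce [set u; w] X.
- by rewrite subUset /cnbrs_in !subUset !sub1set uW wW !nbrs_in_sub.
- by apply/set0Pn; exists u; rewrite !inE eqxx.
- by rewrite subUset !sub1set !inE !eqxx !orbT.
- by rewrite cards2 uw.
- by rewrite !inE => /orP [] /eqP ->; apply/subsetP => y yN; rewrite in_setU !in_setU1 yN !orbT.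
exists S; split => //; apply: leq_trans (sparse_lb_subn _ X4) _.
by rewrite cards2 uw in lbS.
Qed.

End Reduction.

Definition pendant (W : {set T}) (c : T) (K : {set T}) : Prop :=
  [/\ c \notin K, K \subset W, K != set0,
      {in K, forall y, nbrs_in e W y \subset c |: K} &
      {in K, forall y, 1 < #|nbrs_in e W y|}].

Lemma pendant_split (W : {set T}) c K x r : pendant W c K ->
  x \in c |: K -> r \in c |: K -> r != x -> (x == c) || (r == c) ->
  unreached ((c |: K) :\ x) r != set0 ->
  pendant W x (unreached ((c |: K) :\ x) r) /\ #|unreached ((c |: K) :\ x) r| < #|K|.
Proof.
move=> [cK KW _ nbrsK degK] xB rB rx xr_c U0.
set B := c |: K; set U := unreached (B :\ x) r.
have UB : U \subset B :\ x by apply/subsetP => y; rewrite inE => /andP [].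
have rU : r \notin U by rewrite inE connect0 andbF.
have cU : c \notin U.
  by case/orP: xr_c => /eqP <- //; apply/negP => /(subsetP UB); rewrite !inE eqxx.
have UK : U \subset K.
  apply/subsetP => y yU; move: (subsetP UB y yU); rewrite !inE => /andP [_ /orP [/eqP yc|//]].
  by move: cU; rewrite -yc yU.
have xU : x \notin U by apply/negP => /(subsetP UB); rewrite !inE eqxx.
split; last first.
  apply: proper_card; apply/properP; split => //.
  have [xc|xc] := eqVneq x c.
    by exists r => //; move: rB; rewrite in_setU1 -xc (negbTE rx).
  by exists x => //; move: xB; rewrite in_setU1 (negbTE xc).
split => //; first exact: subset_trans UK KW.
  move=> y yU; apply/subsetP => z zN; rewrite in_setU1.
  have [//|zx] := eqVneq z x.
  have zB : z \in B by apply: (subsetP (nbrsK y (subsetP UK y yU))).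
  apply: unreached_closed yU _ _; first by rewrite in_setD1 zx zB.
  by move: zN; rewrite inE => /andP [].
by move=> y /(subsetP UK); apply: degK.
Qed.

Lemma pendant_mindeg2 (W : {set T}) c : c \in W -> {in W, forall u, 1 < #|nbrs_in e W u|} ->
  pendant W c (W :\ c).
Proof.
move=> cW deg2; have [z zN zc] := card_gt1_neq c (deg2 c cW).
split.
- by rewrite !inE eqxx.
- exact: subD1set.
- by apply/set0Pn; exists z; rewrite in_setD1 zc (subsetP (nbrs_in_sub W c)).
- by move=> y _; rewrite setD1K // nbrs_in_sub.
- by move=> y /setD1P [_ /deg2].
Qed.

Lemma pendant_leaf (W : {set T}) l c : l \in W -> nbrs_in e W l = [set c] ->
  {in W :\ l, forall u, 1 < #|nbrs_in e W u|} -> pendant W c (W :\: [set l; c]).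
Proof.
move=> lW Nl deg2.
have : c \in nbrs_in e W l by rewrite Nl set11.
rewrite inE => /andP [cW elc].
have cl : c != l by apply: contraTneq elc => ->; rewrite eirr.
have [z zN zl] : exists2 z, z \in nbrs_in e W c & z != l.
  by apply: card_gt1_neq; apply: deg2; rewrite in_setD1 cl cW.
have zc : z != c by apply: contraTneq zN => ->; rewrite inE eirr andbF.
split.
- by rewrite !inE eqxx orbT.
- exact: subsetDl.
- apply/set0Pn; exists z.
  by rewrite in_setD in_set2 negb_or zl zc (subsetP (nbrs_in_sub W c)).
- move=> y; rewrite in_setD in_set2 negb_or => /andP [/andP [_ yc] yW].
  apply/subsetP => w; rewrite inE => /andP [wW eyw].
  rewrite in_setU1 in_setD wW andbT in_set2 negb_or.
  have [//|wc] := eqVneq w c; rewrite andbT /=.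
  by apply: contraNneq yc => wl; rewrite -in_set1 -Nl inE yW -wl esym.
- move=> y; rewrite in_setD in_set2 negb_or => /andP [/andP [yl _] yW].
  by apply: deg2; rewrite in_setD1 yl.
Qed.

Lemma biconn_sub_block (S : {set T}) : biconn e S -> exists2 B : {set T}, S \subset B & is_block e B.
Proof.
move=> bS; have [B /maxsetP [bB maxB] SB] := maxset_exists (P := biconn e) bS.
exists B; rewrite // /is_block bB; apply/forallP => C; apply/implyP => BC; apply/negP => bC.
by move: (BC); rewrite (maxB C bC (proper_sub BC)) properxx.
Qed.

Lemma cactus_biconn_deg2 (S : {set T}) x : cactus e -> biconn e S -> x \in S ->
  #|nbrs_in e S x| <= 2.
Proof.
move=> cact bS xS; have [B SB blockB] := biconn_sub_block bS.
have xB := subsetP SB x xS.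
apply: leq_trans (subset_leq_card (nbrs_inS x SB)) _.
have := proper_card (nbrs_in_proper xB).
case/or3P: (cact B blockB) => [/and3P [_ _ /forall_inP /(_ x xB) /eqP -> //] | | /eqP ->].
- by case/existsP => a /existsP [b /andP [/eqP -> _]]; rewrite cards2; lia.
- lia.
Qed.

Section BiconnDeg2.

Hypothesis biconn_deg2 : forall (S : {set T}) x, biconn e S -> x \in S ->
  #|nbrs_in e S x| <= 2.

Lemma pendant_edge (W : {set T}) c K : pendant W c K ->
  exists x y, [/\ x \in W, y \in W, e x y, #|nbrs_in e W x| <= 2 & #|nbrs_in e W y| <= 2].
Proof.
have [n] := ubnP #|K|; elim: n c K => // n IH c K /ltnSE leKn pK.
set B := c |: K.
have recurse x r : x \in B -> r \in B -> r != x -> (x == c) || (r == c) ->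
    unreached (B :\ x) r != set0 ->
    exists x y, [/\ x \in W, y \in W, e x y, #|nbrs_in e W x| <= 2 & #|nbrs_in e W y| <= 2].
  move=> xB rB rx xr_c U0; have [pU ltU] := pendant_split pK xB rB rx xr_c U0.
  exact: IH (leq_trans ltU leKn) pU.
case: (pK) => cK KW /set0Pn [y0 y0K] nbrsK degK.
have cB : c \in B by rewrite setU11.
have y0B : y0 \in B by rewrite setU1r.
have y0c : y0 != c by apply: contraNneq cK => <-.
have [y y0y yK] : exists2 y, e y0 y & y \in K.
  have [y yN yc] := card_gt1_neq c (degK y0 y0K).
  move: (subsetP (nbrsK y0 y0K) y yN); rewrite in_setU1 (negbTE yc) => yK.
  by exists y => //; move: yN; rewrite inE => /andP [].
have [Uc0|] := eqVneq (unreached (B :\ c) y0) set0; last first.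
  by apply: (recurse c y0 cB y0B y0c); rewrite eqxx.
have [/forall_inP UK0|/forall_inPn [x xK Ux]] :=
    boolP [forall x in K, unreached (B :\ x) c == set0]; last first.
  apply: (recurse x c (setU1r c xK) cB); rewrite ?eqxx ?orbT //.
  by apply: contraNneq cK => ->.
have biB : biconn e B.
  apply: (biconnD1 y0B (setU1r c yK) y0y) => v.
  rewrite in_setU1 => /orP [/eqP -> | vK]; first exact: connected_unreached0 Uc0.
  exact/connected_unreached0/eqP/UK0.
have degK2 z : z \in K -> #|nbrs_in e W z| <= 2.
  move=> zK; apply: leq_trans (biconn_deg2 biB (setU1r c zK)).
  apply: subset_leq_card; apply/subsetP => w wN.
  by rewrite inE (subsetP (nbrsK z zK) w wN); move: wN; rewrite inE => /andP [].
by exists y0, y; split; rewrite ?degK2 ?(subsetP KW).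
Qed.

Lemma biconn_deg2_reducible (W : {set T}) : W != set0 ->
  (exists2 u, u \in W & nbrs_in e W u = set0) \/
  (exists u w, [/\ u \in W, w \in W, u != w & #|cnbrs_in W u :|: cnbrs_in W w| <= 4]).
Proof.
move=> W0.
have [/exists_inP [u uW /eqP Nu]|/exists_inPn noIso] :=
  boolP [exists u in W, nbrs_in e W u == set0]; first by left; exists u.
right.
have [/exists_inP [u uW /exists_inP [w wW /and3P [uw u1 w1]]]|/exists_inPn twoLeaves] :=
  boolP [exists u in W, exists w in W,
         [&& u != w, #|nbrs_in e W u| <= 1 & #|nbrs_in e W w| <= 1]].
  by exists u, w; split => //; rewrite cardsU !card_cnbrs_in; lia.
have [c [K pK]] : exists c K, pendant W c K.
  have [/exists_inP [l lW l1]|/exists_inPn noLeaf] :=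
    boolP [exists l in W, #|nbrs_in e W l| <= 1]; last first.
    have /set0Pn [c cW] := W0; exists c, (W :\ c).
    by apply: pendant_mindeg2 cW _ => u /noLeaf; rewrite -ltnNge.
  have /cards1P [c Nl] : #|nbrs_in e W l| == 1 by rewrite eqn_leq l1 card_gt0 noIso.
  exists c, (W :\: [set l; c]); apply: pendant_leaf (lW) Nl _ => u /setD1P [ul uW].
  rewrite ltnNge; apply/negP => u1; apply: (negP (twoLeaves u uW)).
  by apply/exists_inP; exists l; rewrite ?ul ?u1 ?l1.
have [x [y [xW yW exy x2 y2]]] := pendant_edge pK.
exists x, y; split => //; first by apply: contraTneq exy => ->; rewrite eirr.
have xy_sub : cnbrs_in W x :|: cnbrs_in W y \subset nbrs_in e W x :|: nbrs_in e W y.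
  by rewrite !subUset !subsetUl !subsetUr !sub1set !inE xW yW exy esym exy orbT.
by apply: leq_trans (subset_leq_card xy_sub) _; rewrite cardsU; lia.
Qed.

End BiconnDeg2.

End Graph.

Theorem lemma4p2 (T : finType) (e : rel T) :
  symmetric e -> irreflexive e -> 0 < #|T| -> cactus e ->
  #|T|./2 + r4 #|T| <= alpha_k e 1.
Proof.
move=> esym eirr _ cact.
have reducible := biconn_deg2_reducible esym eirr (fun S x => cactus_biconn_deg2 eirr cact).
have [S [_ sparseS lbS]] := sparse_subset_lb esym eirr reducible [set: T].
rewrite -cardsT; apply: leq_trans lbS _.
by rewrite /alpha_k; apply: leq_bigmax_cond.
Qed.
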